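(* Let $k\ge2$ and let $G,H$ be graphs. Let $u,v$ be vertices belonging to the same $2$-connected component of $G$, and let $u',v'$ be vertices of $H$ that are not contained in a common $2$-connected component of $H$. Then $\chi^k_G(u,v)\ne\chi^k_H(u',v')$.
   Context: Graphs are finite, simple, undirected (possibly vertex- or arc-colored; uncolored graphs are monochromatic). A graph is $2$-connected if it has more than $2$ vertices and removing any single vertex leaves it connected. A $2$-connected component of $G$ is an inclusion-maximal set $S'\subseteq V(G)$ such that $G[S']$ is $2$-connected. For $k\ge2$, the $k$-dimensional Weisfeiler–Leman algorithm computes a coloring of $V(G)^k$: the initial color of a tuple consists of its input color and the isomorphism type of the ordered induced subgraph on its entries; in each round the new color of $\bar v$ is the pair of its old color and the multiset, over $w\in V(G)$, of the $k$-tuples whose $i$-th component is the old color of $\bar v$ with its $i$-th entry replaced by $w$; the stable coloring is $\chi^k_G$, with canonical colors comparable across graphs. For $\ell<k$, $\chi^k_G(u_1,\dots,u_\ell):=\chi^k_G(u_1,\dots,u_\ell,u_\ell,\dots,u_\ell)$ (last entry repeated $k-\ell$ times). *)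

From mathcomp Require Import all_boot.
Set Implicit Arguments. Unset Strict Implicit. Unset Printing Implicit Defensive.

(* Uncolored graphs are those with constant colorings. Arc colors are only
   meaningful on arcs (ordered pairs of adjacent vertices). *)
Record cgraph := CGraph {
  vert :> finType;
  adj : rel vert;
  adj_sym : symmetric adj;
  adj_irr : irreflexive adj;
  vcol : vert -> nat;
  acol : vert -> vert -> nat
}.

Definition induced_rel (G : cgraph) (S : {set G}) : rel G :=
  fun a b => [&& @adj G a b, a \in S & b \in S].

Definition connected_set (G : cgraph) (S : {set G}) : Prop :=
  forall a b, a \in S -> b \in S -> connect (induced_rel S) a b.

Definition two_connected_set (G : cgraph) (S : {set G}) : Prop :=
  2 < #|S| /\ forall x, x \in S -> connected_set (S :\ x).

Definition two_conn_component (G : cgraph) (S : {set G}) : Prop :=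
  two_connected_set S /\
  forall S' : {set G}, S \subset S' -> two_connected_set S' -> S' = S.

Definition same_2cc (G : cgraph) (u v : G) : Prop :=
  exists S : {set G}, [/\ two_conn_component S, u \in S & v \in S].

Definition upd (T : Type) k (x : 'I_k -> T) (i : 'I_k) (w : T) : 'I_k -> T :=
  fun j => if j == i then w else x j.

(* same initial color: input colors and ordered isomorphism type of the
   induced subgraph on the entries *)
Definition same_atp (G H : cgraph) k (x : 'I_k -> G) (y : 'I_k -> H) : Prop :=
  forall i j : 'I_k,
    [/\ (x i == x j) = (y i == y j),
        @adj G (x i) (x j) = @adj H (y i) (y j),
        @vcol G (x i) = @vcol H (y i) &
        @adj G (x i) (x j) -> @acol G (x i) (x j) = @acol H (y i) (y j)].

(* same_col G H k r x y : the canonical k-WL colors after r rounds of the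
   tuple x of G and the tuple y of H coincide.  Equality of the multisets
   { (chi(x[1/w]), ..., chi(x[k/w])) : w in V(G) } and the analogous one for H
   is written out as the existence of a bijection sigma : V(G) -> V(H)
   matching the entries. *)
Fixpoint same_col (G H : cgraph) k (r : nat) (x : 'I_k -> G) (y : 'I_k -> H)
  : Prop :=
  match r with
  | 0 => same_atp x y
  | r'.+1 =>
      same_col r' x y /\
      exists sigma : G -> H, bijective sigma /\
        forall (w : G) (i : 'I_k),
          same_col r' (upd x i w) (upd y i (sigma w))
  end.

Definition same_stable_col (G H : cgraph) k (x : 'I_k -> G) (y : 'I_k -> H)
  : Prop := forall r, same_col r x y.

Definition pair_tuple (T : Type) k (u v : T) : 'I_k -> T :=
  fun i => if nat_of_ord i == 0 then u else v.

(* Equal stable colours of (a, b, ..., b) and (a', b', ..., b') give equal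
   stable colours of the pairs (a, b) and (a', b'), and a colour-preserving
   bijection w |-> w' with (w, b) ~ (w', b') and (a, w) ~ (a', w').  Numbers of
   walks between the two vertices of a pair are therefore colour invariants,
   and splitting walks at their first visit of a vertex c shows that so are
   the numbers of walks avoiding c.  Hence "x and y are connected in the graph
   minus c" transfers from G to H.  For a, b in a 2-connected set of G this
   says in H that no vertex separates a' from b', and that a' has a neighbour
   joined to b' avoiding a'.  The vertices that no single vertex separates
   from {a', b'} then form a 2-connected set containing a' and b', which lies
   in a 2-connected component. *)

From mathcomp Require Import all_boot zify.
From Stdlib Require Import Classical ClassicalEpsilon FunctionalExtensionality.
Set Implicit Arguments. Unset Strict Implicit. Unset Printing Implicit Defensive.

Lemma finite_antitone_witness (T : finType) (P : nat -> T -> Prop) :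
  (forall r s, P r.+1 s -> P r s) -> (forall r, exists s, P r s) ->
  exists s, forall r, P r s.
Proof.
move=> P_pred P_ex; apply: NNPP => no_s.
have fails s : {r | ~ P r s}.
  apply: constructive_indefinite_description.
  by apply: not_all_ex_not => Ps; apply: no_s; exists s.
pose r_fail s := sval (fails s).
have [s Ps] := P_ex (\max_s r_fail s).
suff: P (r_fail s) s by exact: svalP (fails s).
elim: (\max_s r_fail s) Ps (@leq_bigmax _ r_fail s) => [|R IH] PR.
  by rewrite leqn0 => /eqP ->.
by rewrite leq_eqVlt => /orP [/eqP -> // | ]; apply: IH (P_pred _ _ PR).
Qed.

Section StableColours.

Variables G H : cgraph.

Lemma same_col_comp m k (f : 'I_m -> 'I_k) : injective f ->
  forall r (x : 'I_k -> G) (y : 'I_k -> H),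
  same_col r x y -> same_col r (x \o f) (y \o f).
Proof.
move=> f_inj; elim=> [|r IH] x y /=; first by move=> xy i j; exact: xy.
move=> [xy [s [s_bij s_upd]]]; split; first exact: IH.
exists s; split=> // w i.
have upd_comp (T : Type) (z : 'I_k -> T) t : upd (z \o f) i t = upd z (f i) t \o f.
  by apply: functional_extensionality => j; rewrite /upd /= (inj_eq f_inj).
by rewrite !upd_comp; apply: IH.
Qed.

Lemma same_stable_col_comp m k (f : 'I_m -> 'I_k) (x : 'I_k -> G) (y : 'I_k -> H) :
  injective f -> same_stable_col x y -> same_stable_col (x \o f) (y \o f).
Proof. by move=> f_inj xy r; apply: same_col_comp. Qed.

(* One bijection serves all rounds: there are finitely many candidates, and
   one that works for a round works for all earlier rounds. *)
Lemma same_stable_col_upd k (x : 'I_k -> G) (y : 'I_k -> H) :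
  same_stable_col x y -> exists sigma : G -> H, bijective sigma /\
    forall w i, same_stable_col (upd x i w) (upd y i (sigma w)).
Proof.
move=> xy.
pose P r (s : {ffun G -> H}) :=
  bijective s /\ forall w i, same_col r (upd x i w) (upd y i (s w)).
have [s Ps] : exists s, forall r, P r s.
  apply: finite_antitone_witness => [r s [s_bij s_upd] | r].
    by split=> // w i; exact: (s_upd w i).1.
  have [_ [s [s_bij s_upd]]] := xy r.+1.
  exists [ffun w => s w]; split=> [|w i]; last by rewrite ffunE; apply: s_upd.
  by apply: (eq_bij s_bij) => w; rewrite ffunE.
by exists s; split=> [|w i r]; [exact: (Ps 0).1 | exact: (Ps r).2].
Qed.

End StableColours.

Notation pair2 a b := (@pair_tuple _ 2 a b).

Lemma upd_pair2_fst (T : Type) (a b w : T) : upd (pair2 a b) ord0 w = pair2 w b.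
Proof. by apply: functional_extensionality => -[[|[|n]] ?]. Qed.

Lemma upd_pair2_snd (T : Type) (a b w : T) : upd (pair2 a b) ord_max w = pair2 a w.
Proof. by apply: functional_extensionality => -[[|[|n]] ?]. Qed.

Section PairColours.

Variables (G H : cgraph) (a b : G) (a' b' : H).
Hypothesis ab : same_stable_col (pair2 a b) (pair2 a' b').

Lemma same_stable_col_pair2_eq : (a == b) = (a' == b').
Proof. by have [] := ab 0 ord0 ord_max. Qed.

Lemma same_stable_col_pair2_adj : adj a b = adj a' b'.
Proof. by have [] := ab 0 ord0 ord_max. Qed.

Lemma same_stable_col_pair2_swap : same_stable_col (pair2 b a) (pair2 b' a').
Proof.
pose swap (i : 'I_2) : 'I_2 := if val i == 0 then ord_max else ord0.
have swap_inj : injective swap by move=> [[|[|?]] ?] [[|[|?]] ?] //= _; apply: val_inj.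
have swap_pair2 (T : Type) (x y : T) : pair2 x y \o swap = pair2 y x.
  by apply: functional_extensionality => -[[|[|n]] ?].
by rewrite -swap_pair2 -[pair2 b' a']swap_pair2; apply: same_stable_col_comp.
Qed.

Lemma same_stable_col_pair2_upd : exists sigma : G -> H, bijective sigma /\
  forall w, same_stable_col (pair2 w b) (pair2 (sigma w) b') /\
            same_stable_col (pair2 a w) (pair2 a' (sigma w)).
Proof.
have [s [s_bij s_upd]] := same_stable_col_upd ab.
exists s; split=> // w.
have := s_upd w ord0; have := s_upd w ord_max.
by rewrite !upd_pair2_fst !upd_pair2_snd => ? ?; split.
Qed.

End PairColours.

Lemma same_stable_col_pair2 (G H : cgraph) k (u v : G) (u' v' : H) : 1 < k ->
  same_stable_col (@pair_tuple _ k u v) (@pair_tuple _ k u' v') ->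
  same_stable_col (pair2 u v) (pair2 u' v').
Proof.
move=> k_gt1 uv.
have widen_inj : injective (widen_ord k_gt1) by move=> i j /(congr1 val) /= /val_inj.
exact: same_stable_col_comp widen_inj uv.
Qed.

Section InducedConnectivity.

Variable G : cgraph.
Implicit Types (A B : {set G}) (c x y : G) (p : seq G).

Lemma induced_rel_sym A : symmetric (induced_rel A).
Proof.
by move=> x y; rewrite /induced_rel adj_sym; case: (x \in A); case: (y \in A);
  rewrite ?andbF.
Qed.

Lemma connect_induced_sym A x y :
  connect (induced_rel A) x y = connect (induced_rel A) y x.
Proof. exact/sym_connect_sym/induced_rel_sym. Qed.

Lemma connect_induced_sub A B x y : A \subset B ->
  connect (induced_rel A) x y -> connect (induced_rel B) x y.
Proof.
move=> AB; apply: connect_sub => z w /and3P [zw zA wA]; apply: connect1.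
by rewrite /induced_rel zw (subsetP AB _ zA) (subsetP AB _ wA).
Qed.

Lemma connect_induced_mem A x y : x \in A -> connect (induced_rel A) x y -> y \in A.
Proof.
move=> xA /connectP [p + ->]; elim: p x xA => [//|z p IH] x _ /=.
by case/andP => /and3P [_ _ zA]; apply: IH.
Qed.

Lemma path_connect_induced A x p :
  path (@adj G) x p -> all (mem A) (x :: p) -> connect (induced_rel A) x (last x p).
Proof.
elim: p x => [|y p IH] x /=; first by rewrite connect0.
case/andP => xy p_path /and3P [xA yA p_A].
apply: connect_trans (IH y p_path _); last by rewrite /= yA.
by apply: connect1; rewrite /induced_rel xy xA.
Qed.

Lemma connect_induced_uniq_path A x y : x \in A -> connect (induced_rel A) x y ->
  exists p, [/\ path (@adj G) x p, all (mem A) (x :: p), uniq (x :: p) & y = last x p].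
Proof.
move=> xA /connectP [p0 /shortenP [p p_path p_uniq _] ->]; exists p; split=> //.
  by elim: p x p_path {xA p_uniq} => //= z p IH x /andP [/and3P [-> _ _] /IH].
elim: p x xA p_path {p_uniq} => [|z p IH] x xA /=; first by rewrite xA.
by case/andP => /and3P [_ _ zA] /(IH z zA); rewrite xA.
Qed.

Definition connected_off c x y := connect (induced_rel [set~ c]) x y.

Lemma connected_off_edge c x y : adj x y -> x != c -> y != c -> connected_off c x y.
Proof.
by move=> xy xc yc; apply: connect1; rewrite /induced_rel !in_setC1 xy xc yc.
Qed.

Lemma connected_off_neq c x y : x != c -> connected_off c x y -> y != c.
Proof. by rewrite -!in_setC1; apply: connect_induced_mem. Qed.

Lemma connected_off_sym c x y : connected_off c x y = connected_off c y x.
Proof. exact: connect_induced_sym. Qed.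

End InducedConnectivity.

Section Walks.

Variable G : cgraph.
Implicit Types (c x y z : G) (t : nat).

Fixpoint walks t x y : nat :=
  if t is t'.+1 then \sum_z adj x z * walks t' z y else x == y.

Fixpoint first_hit_walks t x c : nat :=
  if t is t'.+1 then (x != c) * \sum_z adj x z * first_hit_walks t' z c
  else x == c.

Fixpoint avoiding_walks c t x y : nat :=
  if t is t'.+1 then (x != c) * \sum_z adj x z * avoiding_walks c t' z y
  else (x == y) && (x != c).

(* Split each walk from [x] to [y] at its first visit of [c], if any. *)
Lemma walks_first_hit_decomp c t x y :
  walks t x y =
  avoiding_walks c t x y + \sum_(s < t.+1) first_hit_walks s x c * walks (t - s) c y.
Proof.
elim: t x y => [|t IH] x y.
  rewrite big_ord1 /=; have [->|xc] := eqVneq x c; first by case: (c == y).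
  by case: (x == y).
rewrite big_ord_recl subn0.
under eq_bigr => s _ do rewrite lift0 subSS.
have [->|xc] /= := eqVneq x c.
  rewrite eqxx /= mul0n add0n mul1n -[LHS]addn0; congr (_ + _).
  by rewrite big1 // => s _; rewrite mul0n.
rewrite xc (negbTE xc) /= !mul1n mul0n add0n.
under eq_bigr => z _ do rewrite IH mulnDr big_distrr.
rewrite big_split /= exchange_big; congr (_ + _).
apply: eq_bigr => s _; rewrite mul1n big_distrl /=.
by apply: eq_bigr => z _; rewrite mulnA.
Qed.

Lemma avoiding_walks_gt0_neq c t x y : 0 < avoiding_walks c t x y -> x != c.
Proof. by case: t => [|t] /=; case: (x != c); rewrite ?andbF ?mul0n. Qed.

Lemma avoiding_walks_connected_off c t x y :
  0 < avoiding_walks c t x y -> connected_off c x y.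
Proof.
elim: t x => [|t IH] x /=; first by case: eqP => // -> _; exact: connect0.
have [//|xc] := eqVneq x c; rewrite mul1n lt0n sum_nat_eq0 negb_forall.
case/existsP => z; rewrite -lt0n muln_gt0 lt0b => /andP [xz walks_z].
apply: connect_trans (IH _ walks_z); apply: connect1.
by rewrite /induced_rel xz !in_setC1 xc (avoiding_walks_gt0_neq walks_z).
Qed.

Lemma connected_off_avoiding_walks c x y : x != c ->
  connected_off c x y -> exists t, 0 < avoiding_walks c t x y.
Proof.
move=> xc /connectP [p p_path ->]; elim: p x xc p_path => [|z p IH] x xc /=.
  by move=> _; exists 0; rewrite /= eqxx xc.
case/andP => /and3P [xz _]; rewrite in_setC1 => zc /(IH z zc) [t walks_z].
exists t.+1; rewrite /= xc mul1n (bigD1 z) //= xz mul1n.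
exact: leq_trans walks_z (leq_addr _ _).
Qed.

End Walks.

Section WalkCountInvariance.

Variables G H : cgraph.

Lemma walks_same_stable_col t (a b : G) (a' b' : H) :
  same_stable_col (pair2 a b) (pair2 a' b') -> walks t a b = walks t a' b'.
Proof.
elim: t a b a' b' => [|t IH] a b a' b' ab /=.
  by rewrite (same_stable_col_pair2_eq ab).
have [s [s_bij s_upd]] := same_stable_col_pair2_upd ab.
rewrite [RHS](reindex s) /=; last exact: onW_bij.
apply: eq_bigr => z _; have [zb az] := s_upd z.
by rewrite (IH _ _ _ _ zb) (same_stable_col_pair2_adj az).
Qed.

Lemma first_hit_walks_same_stable_col t (a c : G) (a' c' : H) :
  same_stable_col (pair2 a c) (pair2 a' c') ->
  first_hit_walks t a c = first_hit_walks t a' c'.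
Proof.
elim: t a a' => [|t IH] a a' ac /=; first by rewrite (same_stable_col_pair2_eq ac).
have [s [s_bij s_upd]] := same_stable_col_pair2_upd ac.
rewrite (same_stable_col_pair2_eq ac) [in RHS](reindex s) /=; last exact: onW_bij.
congr (_ * _); apply: eq_bigr => z _; have [zc az] := s_upd z.
by rewrite (IH _ _ zc) (same_stable_col_pair2_adj az).
Qed.

Lemma avoiding_walks_same_stable_col t (x y c : G) (x' y' c' : H) :
  same_stable_col (pair2 x y) (pair2 x' y') ->
  same_stable_col (pair2 x c) (pair2 x' c') ->
  same_stable_col (pair2 c y) (pair2 c' y') ->
  avoiding_walks c t x y = avoiding_walks c' t x' y'.
Proof.
move=> xy xc cy.
apply/(@addIn (\sum_(s < t.+1) first_hit_walks s x c * walks (t - s) c y)).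
rewrite -walks_first_hit_decomp (walks_same_stable_col t xy).
rewrite (walks_first_hit_decomp c').
congr (_ + _); apply: eq_bigr => s _.
by rewrite (first_hit_walks_same_stable_col s xc) (walks_same_stable_col _ cy).
Qed.

Lemma connected_off_same_stable_col (x y c : G) (x' y' c' : H) :
  same_stable_col (pair2 x y) (pair2 x' y') ->
  same_stable_col (pair2 x c) (pair2 x' c') ->
  same_stable_col (pair2 c y) (pair2 c' y') ->
  x != c -> connected_off c x y -> connected_off c' x' y'.
Proof.
move=> xy xc cy x_c /(connected_off_avoiding_walks x_c) [t walks_t].
apply: (@avoiding_walks_connected_off _ c' t).
by rewrite -(avoiding_walks_same_stable_col t xy xc cy).
Qed.

End WalkCountInvariance.

Section TwoConnectedSets.

Variables (G : cgraph) (S : {set G}).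
Hypothesis S_2conn : two_connected_set S.

Lemma two_connected_third (a b : G) : exists x, [/\ x \in S, x != a & x != b].
Proof.
have : 0 < #|S :\ a :\ b|.
  move: S_2conn.1; rewrite (cardsD1 a S) (cardsD1 b (S :\ a)).
  by case: (a \in S); case: (b \in S :\ a) => /=; lia.
by rewrite card_gt0 => /set0Pn [x]; rewrite !in_setD1 => /and3P [? ? ?]; exists x.
Qed.

Lemma two_connected_connected_off (a b c : G) : a \in S -> b \in S ->
  a != c -> b != c -> connected_off c a b.
Proof.
move=> aS bS ac bc.
have [x [xS xa xb] sub_c] : exists2 x, [/\ x \in S, x != a & x != b] &
    S :\ x \subset [set~ c].
  have [cS | cNS] := boolP (c \in S).
    exists c; first by split; rewrite // eq_sym.
    by apply/subsetP => z /setD1P [zc _]; rewrite in_setC1.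
  have [x [xS xa xb]] := two_connected_third a b; exists x => //.
  apply/subsetP => z /setD1P [_ zS].
  by rewrite in_setC1; apply: contraNneq cNS => <-.
apply: connect_induced_sub sub_c _; apply: S_2conn.2 => //; rewrite in_setD1 ?aS ?bS.
  by rewrite eq_sym xa.
by rewrite eq_sym xb.
Qed.

Lemma two_connected_neighbor (a b : G) : a \in S -> b \in S -> a != b ->
  exists x, [/\ adj a x, x != b & connected_off a b x].
Proof.
move=> aS bS ab.
have [z [zS za zb]] := two_connected_third a b.
have aSb : a \in S :\ b by rewrite in_setD1 ab aS.
have zSb : z \in S :\ b by rewrite in_setD1 zb zS.
case/connectP: (S_2conn.2 b bS a z aSb zSb) => [[|x p]] /=.
  by move=> _ za'; rewrite za' eqxx in za.
case/andP => /and3P [ax _ /setD1P [xb xS]] _ _.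
have xa : x != a by apply: contraTneq ax => ->; rewrite adj_irr.
exists x; split=> //.
apply: (@connect_induced_sub _ (S :\ a)).
  by apply/subsetP => y /setD1P [ya _]; rewrite in_setC1.
by apply: S_2conn.2; rewrite // in_setD1 ?xa // eq_sym ab.
Qed.

End TwoConnectedSets.

Section Unseparated.

Variables (H : cgraph) (a b : H).

Definition unseparated : {set H} :=
  [set z | [forall c, (c != z) ==> connected_off c z a || connected_off c z b]].

Lemma unseparatedP z : reflect
  (forall c, c != z -> connected_off c z a \/ connected_off c z b)
  (z \in unseparated).
Proof.
rewrite inE; apply: (iffP forallP) => [z_ok c cz | z_ok c].
  by apply/orP; move/implyP: (z_ok c); apply.
by apply/implyP => cz; apply/orP; apply: z_ok.
Qed.

Lemma unseparated_l : a \in unseparated.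
Proof. by apply/unseparatedP => c _; left; apply: connect0. Qed.

Lemma unseparated_r : b \in unseparated.
Proof. by apply/unseparatedP => c _; right; apply: connect0. Qed.

(* For the successor [y] of [z] and a vertex [c]: if [c] lies further along
   the path, [y] reaches [z] avoiding [c] and [z] is unseparated; otherwise
   the rest of the path avoids [c]. *)
Lemma unseparated_path z p : z \in unseparated -> path (@adj H) z p ->
  uniq (z :: p) -> (last z p == a) || (last z p == b) -> all (mem unseparated) p.
Proof.
elim: p z => [//|y p IH] z z_ok /= /andP [zy p_path] /andP [zNp p_uniq] p_end.
have y_ok : y \in unseparated.
  apply/unseparatedP => c cy; have [cp | cNp] := boolP (c \in p).
    have cz : c != z by apply: contraNneq zNp => <-; rewrite inE cp orbT.
    have yz : connected_off c y z by rewrite connected_off_edge 1?adj_sym 1?eq_sym.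
    by case: (unseparatedP _ z_ok c cz) => z_end; [left | right];
      apply: connect_trans yz z_end.
  have y_end : connected_off c y (last y p).
    apply: (@path_connect_induced _ [set~ c]) => //=.
    rewrite in_setC1 eq_sym cy /=.
    by apply/allP => w wp; rewrite /= in_setC1; apply: contraNneq cNp => <-.
  by case/orP: p_end => /eqP end_p; rewrite end_p in y_end; [left | right].
by rewrite y_ok (IH y).
Qed.

Lemma connect_unseparated y z e : z \in unseparated -> z != y ->
  (e == a) || (e == b) -> connected_off y z e ->
  connect (induced_rel (unseparated :\ y)) z e.
Proof.
move=> z_ok zy e_ab ze.
have zNy : z \in [set~ y] by rewrite in_setC1.
have [p [p_path p_avoid p_uniq e_end]] := connect_induced_uniq_path zNy ze.
subst e; have p_ok := unseparated_path z_ok p_path p_uniq e_ab.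
apply: path_connect_induced => //; apply/allP => w w_zp.
have := allP p_avoid w w_zp; rewrite /= in_setD1 in_setC1 => -> /=.
by move: w_zp; rewrite inE => /orP [/eqP -> // | /(allP p_ok)].
Qed.

Lemma two_connected_unseparated x : a != b ->
  (forall c, c != a -> c != b -> connected_off c a b) ->
  adj a x -> x != b -> connected_off a b x -> two_connected_set unseparated.
Proof.
move=> ab no_cut ax xb bx.
have xa : x != a by apply: contraTneq ax => ->; rewrite adj_irr.
have x_ok : x \in unseparated.
  apply/unseparatedP => c cx; have [-> | ca] := eqVneq c a.
    by right; rewrite connected_off_sym.
  by left; rewrite connected_off_edge 1?adj_sym 1?eq_sym.
split.
  have /subset_leq_card : x |: [set a; b] \subset unseparated.
    apply/subsetP => w /setU1P [-> // | /set2P [] ->];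
      [exact: unseparated_l | exact: unseparated_r].
  by apply: leq_trans; rewrite cardsU1 cards2 !inE negb_or xa xb ab.
move=> y y_ok z1 z2.
have reach_end z : z \in unseparated :\ y -> exists2 e, (e == a) || (e == b) &
    e != y /\ connect (induced_rel (unseparated :\ y)) z e.
  case/setD1P => zy z_ok; have yz : y != z by rewrite eq_sym.
  have [ze | ze] := unseparatedP _ z_ok y yz.
    exists a; first by rewrite eqxx.
    split; first exact: connected_off_neq zy ze.
    by apply: connect_unseparated z_ok zy _ ze; rewrite eqxx.
  exists b; first by rewrite eqxx orbT.
  split; first exact: connected_off_neq zy ze.
  by apply: connect_unseparated z_ok zy _ ze; rewrite eqxx orbT.
have ab_conn : a != y -> b != y -> connect (induced_rel (unseparated :\ y)) a b.
  move=> a_y b_y; apply: (connect_unseparated unseparated_l a_y).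
    by rewrite eqxx orbT.
  by apply: no_cut; rewrite eq_sym.
move=> /reach_end [e1 e1_ab [e1y z1e1]] /reach_end [e2 e2_ab [e2y z2e2]].
rewrite connect_induced_sym in z2e2.
apply: connect_trans z1e1 (connect_trans _ z2e2).
by case/orP: e1_ab e1y => /eqP -> e1y; case/orP: e2_ab e2y => /eqP -> e2y;
  rewrite ?connect0 ?ab_conn // connect_induced_sym ab_conn.
Qed.

End Unseparated.

Section MaximalTwoConnected.

Variable G : cgraph.

Definition two_connectedb (S : {set G}) : bool :=
  (2 < #|S|) && [forall x in S, forall y in S :\ x, forall z in S :\ x,
                 connect (induced_rel (S :\ x)) y z].

Lemma two_connected_setP S : reflect (two_connected_set S) (two_connectedb S).
Proof.
apply: (iffP andP) => [] [S_gt2 S_conn]; split=> //.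
  move=> x xS y z yS zS; move/forall_inP/(_ x xS): S_conn.
  by move/forall_inP/(_ y yS)/forall_inP/(_ z zS).
apply/forall_inP => x xS; apply/forall_inP => y yS; apply/forall_inP => z zS.
exact: S_conn.
Qed.

Lemma two_connected_sub_component (S : {set G}) :
  two_connected_set S -> exists2 T, two_conn_component T & S \subset T.
Proof.
move=> /two_connected_setP S2.
have [T /maxsetP [/two_connected_setP T2 T_max] ST] := maxset_exists S2.
by exists T => //; split=> // S' TS' /two_connected_setP S'2; apply: T_max.
Qed.

End MaximalTwoConnected.

Section Transfer.

Variables (G H : cgraph) (S : {set G}).
Hypothesis S_2conn : two_connected_set S.

Lemma same_stable_col_two_connected_neq (a b : G) (a' b' : H) :
  a \in S -> b \in S -> a != b -> same_stable_col (pair2 a b) (pair2 a' b') ->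
  exists T : {set H}, [/\ two_connected_set T, a' \in T & b' \in T].
Proof.
move=> aS bS ab col.
have [s [[g sg gs] s_upd]] := same_stable_col_pair2_upd col.
have ab' : a' != b' by rewrite -(same_stable_col_pair2_eq col).
have no_cut c' : c' != a' -> c' != b' -> connected_off c' a' b'.
  move=> ca cb; have [cb_col ac_col] := s_upd (g c').
  rewrite gs in cb_col ac_col.
  have ac : a != g c' by rewrite (same_stable_col_pair2_eq ac_col) eq_sym.
  have bc : b != g c' by rewrite eq_sym (same_stable_col_pair2_eq cb_col).
  apply: (connected_off_same_stable_col col ac_col cb_col ac).
  exact: (two_connected_connected_off S_2conn aS bS ac bc).
have [x [ax xb bx]] := two_connected_neighbor S_2conn aS bS ab.
have [xb_col ax_col] := s_upd x.
exists (unseparated a' b'); split; [|exact: unseparated_l | exact: unseparated_r].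
apply: (two_connected_unseparated (x := s x) ab' no_cut).
- by rewrite -(same_stable_col_pair2_adj ax_col).
- by rewrite -(same_stable_col_pair2_eq xb_col).
- apply: (connected_off_same_stable_col (same_stable_col_pair2_swap xb_col)
    (same_stable_col_pair2_swap col) ax_col _ bx).
  by rewrite eq_sym.
Qed.

Lemma same_stable_col_two_connected (a b : G) (a' b' : H) :
  a \in S -> b \in S -> same_stable_col (pair2 a b) (pair2 a' b') ->
  exists T : {set H}, [/\ two_connected_set T, a' \in T & b' \in T].
Proof.
move=> aS bS col; have [ab | ab] := eqVneq a b; last first.
  exact: same_stable_col_two_connected_neq col.
subst b; have /eqP <- : a' == b' by rewrite -(same_stable_col_pair2_eq col).
have [w [wS wa _]] := two_connected_third S_2conn a a.
have [s [_ s_upd]] := same_stable_col_pair2_upd col.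
have aw : a != w by rewrite eq_sym.
have [T [T2 a'T _]] := same_stable_col_two_connected_neq aS wS aw (s_upd w).2.
by exists T.
Qed.

End Transfer.

Theorem theorem6 (k : nat) (G H : cgraph) (u v : G) (u' v' : H) :
  2 <= k ->
  same_2cc u v ->
  ~ same_2cc u' v' ->
  ~ same_stable_col (@pair_tuple _ k u v) (@pair_tuple _ k u' v').
Proof.
move=> k_gt1 [S [[S_2conn _] uS vS]] not_uv' /(same_stable_col_pair2 k_gt1) col.
have [T [T_2conn u'T v'T]] := same_stable_col_two_connected S_2conn uS vS col.
have [C C_comp TC] := two_connected_sub_component T_2conn.
by apply: not_uv'; exists C; split=> //; apply: (subsetP TC).
Qed.
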